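(* Let $R,R'$ be parallelograms in $\mathbb{R}^2$ each having a pair of vertical edges, such that $I(R)=I(R')$, $U(R)\cap U(R')\neq\emptyset$, $R\cap R'\neq\emptyset$, and $H(R)\le H(R')$. Then $R\subseteq 7R'$. Moreover, if $7H(R)\le H(R')$, then $7R\subseteq 7R'$.
   Context: For a parallelogram $R$ with two vertical edges: the height $H(R)$ is the common length of the vertical edges; the shadow $I(R)$ is the projection of $R$ onto the $x$-axis; the central line segment is the segment joining the midpoints of the vertical edges; $U(R)$ is the set of slopes of (non-vertical) lines intersecting both vertical edges of $R$. For $C>0$, $CR$ denotes the parallelogram with the same central line segment as $R$ and height $C\,H(R)$. *)

From Stdlib Require Import Reals.
Open Scope R_scope.

(* A parallelogram with two vertical edges, parametrized by:
   its shadow [pa, pb] (pa < pb), the central line y = slope * x + icpt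
   (the line through the midpoints of the two vertical edges), and its
   height ht > 0 (common length of the vertical edges).  Its vertices are
   (pa, slope*pa+icpt +- ht/2) and (pb, slope*pb+icpt +- ht/2). *)
Record para := Para {
  pa : R; pb : R; slope : R; icpt : R; ht : R;
  pab : pa < pb;
  pht : 0 < ht
}.

Definition region_h (P : para) (h : R) (p : R * R) : Prop :=
  pa P <= fst p <= pb P /\
  Rabs (snd p - (slope P * fst p + icpt P)) <= h / 2.

Definition region (P : para) : R * R -> Prop := region_h P (ht P).

(* C R : same central line segment, height C * H(R). *)
Definition scaled (C : R) (P : para) : R * R -> Prop := region_h P (C * ht P).

Definition H (P : para) : R := ht P.

Definition shadow (P : para) (x : R) : Prop := exists y, region P (x, y).

Definition left_edge (P : para) (p : R * R) : Prop :=
  fst p = pa P /\ Rabs (snd p - (slope P * pa P + icpt P)) <= ht P / 2.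
Definition right_edge (P : para) (p : R * R) : Prop :=
  fst p = pb P /\ Rabs (snd p - (slope P * pb P + icpt P)) <= ht P / 2.

Definition U (P : para) (s : R) : Prop :=
  exists t : R,
    (exists p, left_edge P p /\ snd p = s * fst p + t) /\
    (exists q, right_edge P q /\ snd q = s * fst q + t).

(* Equal shadows give R and R' the same endpoints a < b.  A line of a common
   slope s that meets both vertical edges of a parallelogram stays inside it
   over [a, b], so R contains a segment of y = s x + t and R' one of
   y = s x + t'.  Evaluating at the abscissa of a common point of R and R'
   gives |t - t'| <= H + H', hence the central lines of R and R' are at
   vertical distance at most 3 (H + H') / 2 <= 3 H' over [a, b], which
   leaves room for a vertical half-extent of H' / 2 on top (7 = 1 + 2 * 3). *)
From Stdlib Require Import Reals Lra Psatz.
Open Scope R_scope.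

Lemma Rabs_le_bounds (x K : R) : Rabs x <= K <-> -K <= x <= K.
Proof. unfold Rabs; destruct (Rcase_abs x); split; intros; lra. Qed.

Lemma Rabs_affine_le_interval (m c a b x K : R) :
  a <= x <= b -> Rabs (m * a + c) <= K -> Rabs (m * b + c) <= K ->
  Rabs (m * x + c) <= K.
Proof.
  rewrite !Rabs_le_bounds; intros [Hax Hxb] [Ha1 Ha2] [Hb1 Hb2].
  destruct (Req_dec a b) as [<- | Hab].
  { replace x with a by lra; lra. }
  (* [m x + c] is a convex combination of its values at [a] and [b]. *)
  assert (E : (b - a) * (m * x + c) = (b - x) * (m * a + c) + (x - a) * (m * b + c))
    by ring.
  split; nra.
Qed.

Definition center (P : para) (x : R) : R := slope P * x + icpt P.

Lemma region_h_le (P : para) (h1 h2 : R) (p : R * R) :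
  h1 <= h2 -> region_h P h1 p -> region_h P h2 p.
Proof. intros Hh [Hx Hy]; split; [exact Hx | lra]. Qed.

Lemma shadowE (P : para) (x : R) : shadow P x <-> pa P <= x <= pb P.
Proof.
  split.
  - intros [y [Hx _]]; exact Hx.
  - intros Hx; exists (center P x); split; [exact Hx |].
    unfold center; simpl; rewrite Rminus_diag, Rabs_R0.
    pose proof (pht P); lra.
Qed.

Lemma same_shadow_endpoints (P P' : para) :
  (forall x, shadow P x <-> shadow P' x) -> pa P = pa P' /\ pb P = pb P'.
Proof.
  intros Hsh.
  assert (Hiff : forall x, pa P <= x <= pb P <-> pa P' <= x <= pb P').
  { intros x; rewrite <- !shadowE; apply Hsh. }
  pose proof (pab P); pose proof (pab P').
  destruct (Hiff (pa P)) as [H1 _]; destruct (Hiff (pa P')) as [_ H2];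
  destruct (Hiff (pb P)) as [H3 _]; destruct (Hiff (pb P')) as [_ H4].
  specialize (H1 ltac:(lra)); specialize (H2 ltac:(lra));
  specialize (H3 ltac:(lra)); specialize (H4 ltac:(lra)).
  lra.
Qed.

Lemma U_line_in_region (P : para) (s : R) :
  U P s -> exists t, forall x, pa P <= x <= pb P -> region P (x, s * x + t).
Proof.
  intros [t [[[u v] [[Hu Hv] Hl]] [[u' v'] [[Hu' Hv'] Hr]]]]; simpl in *.
  rewrite Hl, Hu in Hv; rewrite Hr, Hu' in Hv'.
  exists t; intros x Hx; split; [exact Hx |]; simpl.
  replace (s * x + t - (slope P * x + icpt P))
    with ((s - slope P) * x + (t - icpt P)) by ring.
  apply (Rabs_affine_le_interval _ _ (pa P) (pb P) _ _ Hx).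
  - replace ((s - slope P) * pa P + (t - icpt P))
      with (s * pa P + t - (slope P * pa P + icpt P)) by ring; exact Hv.
  - replace ((s - slope P) * pb P + (t - icpt P))
      with (s * pb P + t - (slope P * pb P + icpt P)) by ring; exact Hv'.
Qed.

Lemma centers_close (P P' : para) (s : R) :
  pa P = pa P' -> pb P = pb P' -> U P s -> U P' s ->
  (exists p, region P p /\ region P' p) ->
  forall x, pa P <= x <= pb P ->
  Rabs (center P x - center P' x) <= 3 * (ht P + ht P') / 2.
Proof.
  intros Ea Eb HU HU' [[x0 y0] [[Hx0 Hy0] [_ Hy0']]] x Hx.
  destruct (U_line_in_region P s HU) as [t Ht].
  destruct (U_line_in_region P' s HU') as [t' Ht'].
  rewrite <- Ea, <- Eb in Ht'.
  destruct (Ht x0 Hx0) as [_ Hl0]; destruct (Ht' x0 Hx0) as [_ Hl0'].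
  destruct (Ht x Hx) as [_ Hl]; destruct (Ht' x Hx) as [_ Hl'].
  simpl in *; unfold center.
  rewrite Rabs_le_bounds in Hy0, Hy0', Hl0, Hl0', Hl, Hl' |- *.
  lra.
Qed.

Lemma region_h_shift_center (P P' : para) (h d : R) (p : R * R) :
  pa P = pa P' -> pb P = pb P' ->
  (forall x, pa P <= x <= pb P -> Rabs (center P x - center P' x) <= d) ->
  region_h P h p -> region_h P' (h + 2 * d) p.
Proof.
  intros Ea Eb Hd [Hx Hy]; split; [rewrite <- Ea, <- Eb; exact Hx |].
  specialize (Hd _ Hx); unfold center in Hd.
  rewrite Rabs_le_bounds in Hy, Hd |- *; lra.
Qed.

Theorem lemma3p1 (P P' : para) :
  (forall x, shadow P x <-> shadow P' x) ->
  (exists s, U P s /\ U P' s) ->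
  (exists p, region P p /\ region P' p) ->
  H P <= H P' ->
  (forall p, region P p -> scaled 7 P' p) /\
  (7 * H P <= H P' -> forall p, scaled 7 P p -> scaled 7 P' p).
Proof.
  unfold H, scaled, region; intros Hsh [s [HU HU']] Hmeet Hh.
  destruct (same_shadow_endpoints P P' Hsh) as [Ea Eb].
  pose proof (centers_close P P' s Ea Eb HU HU' Hmeet) as Hd.
  pose proof (pht P); split.
  - intros p Hp; apply (region_h_le P' (ht P + 2 * (3 * (ht P + ht P') / 2))); [lra |].
    exact (region_h_shift_center P P' _ _ p Ea Eb Hd Hp).
  - intros H7 p Hp; apply (region_h_le P' (7 * ht P + 2 * (3 * (ht P + ht P') / 2))); [lra |].
    exact (region_h_shift_center P P' _ _ p Ea Eb Hd Hp).
Qed.
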